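(* Let $G$ be a locally soluble group in which every non-abelian subgroup $H$ satisfies $C_G(H)\le H$. If the hypercenter of $G$ contains two non-commuting elements of finite order, then $G$ is locally finite.
   Context: The hypercenter of $G$ is the final term of the (transfinite) upper central series of $G$. $C_G(H)$ denotes the centralizer of $H$ in $G$. *)

From Stdlib Require Import List Arith.
Import ListNotations.

Record group := Group {
  carrier :> Type;
  mul : carrier -> carrier -> carrier;
  one : carrier;
  inv : carrier -> carrier;
  mulA : forall x y z, mul x (mul y z) = mul (mul x y) z;
  mul1g : forall x, mul one x = x;
  mulVg : forall x, mul (inv x) x = one
}.

Arguments mul {g} x y.
Arguments one {g}.
Arguments inv {g} x.

Section GroupDefs.
Variable G : group.

Fixpoint gpow (x : G) (n : nat) : G :=
  match n with 0 => one | S m => mul x (gpow x m) end.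

Definition comm (x y : G) : G := mul (mul (inv x) (inv y)) (mul x y).

Definition commute (x y : G) : Prop := mul x y = mul y x.

Definition finite_order (x : G) : Prop := exists n, 0 < n /\ gpow x n = one.

Definition is_subgroup (H : G -> Prop) : Prop :=
  H one /\ (forall x y, H x -> H y -> H (mul x y)) /\ (forall x, H x -> H (inv x)).

Inductive gen (P : G -> Prop) : G -> Prop :=
  | gen_base x : P x -> gen P x
  | gen_one : gen P one
  | gen_mul x y : gen P x -> gen P y -> gen P (mul x y)
  | gen_inv x : gen P x -> gen P (inv x).

Definition fg_subgroup (s : list G) : G -> Prop := gen (fun x => In x s).

Fixpoint derived (H : G -> Prop) (n : nat) : G -> Prop :=
  match n with
  | 0 => H
  | S m => gen (fun z => exists a b, derived H m a /\ derived H m b /\ z = comm a b)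
  end.

Definition soluble (H : G -> Prop) : Prop :=
  exists n, forall x, derived H n x -> x = one.

Definition finite_set (H : G -> Prop) : Prop :=
  exists l : list G, forall x, H x -> In x l.

Definition locally_soluble : Prop := forall s : list G, soluble (fg_subgroup s).

Definition locally_finite : Prop := forall s : list G, finite_set (fg_subgroup s).

Definition abelian (H : G -> Prop) : Prop :=
  forall x y, H x -> H y -> commute x y.

Definition centralizer_le (H : G -> Prop) : Prop :=
  forall g : G, (forall h, H h -> commute g h) -> H g.

(* Hypercenter: the final term of the transfinite upper central series
   Z_0 = 1, Z_{a+1} = {x | forall g, [x,g] in Z_a}, Z_l = U_{a<l} Z_a.
   This is the least fixed point above {1} of the monotone operator
   S |-> {x | forall g, [x,g] in S}, i.e. the inductive predicate below. *)
Inductive hypercenter : G -> Prop :=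
  | hyper_one : hypercenter one
  | hyper_step x : (forall g : G, hypercenter (comm x g)) -> hypercenter x.

End GroupDefs.

(* Hypercentral elements of finite order generate a finite subgroup W: the
   left-normed commutators of some weight K in the generators vanish, and,
   descending in the weight, the commutators of weight k are central and of
   finite order modulo the finite normal subgroup generated by those of higher
   weight, so they generate together with it a finite subgroup.
   Hence for any g the Engel commutators [x, g, ..., g] of a hypercentral x of
   finite order span a finite subgroup normalized by g, so a power of g
   centralizes x.  A common power u of g then centralizes the non-abelian
   subgroup <x, y>, so u lies in <x, y>, which is finite: G is periodic.
   Finally a periodic soluble group generated by s is finite, by induction on
   its derived length: the abelianization is finite, and the Schreier
   generators of a finite transversal of the derived subgroup span a finitely
   generated subgroup of smaller derived length, of finite index. *)

From Stdlib Require Import List Arith Lia Classical.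
Import ListNotations.

Section Development.
Variable G : group.
Local Notation "x ** y" := (@mul G x y) (at level 40, left associativity).
Local Notation "1" := (@one G).
Local Notation "x ^-1" := (@inv G x) (at level 3).
Local Notation "x ^+ n" := (gpow G x n) (at level 29, left associativity).
Local Notation "[~ x , y ]" := (comm G x y).
Local Notation Z := (hypercenter G).

Lemma mulgV (x : G) : x ** x^-1 = 1.
Proof.
  rewrite <- (mul1g G (x ** x^-1)), <- (mulVg G (x^-1)) at 1.
  rewrite <- mulA, (mulA G (x^-1)), mulVg, mul1g. apply mulVg.
Qed.

Lemma mulg1 (x : G) : x ** 1 = x.
Proof. rewrite <- (mulVg G x), mulA, mulgV, mul1g. reflexivity. Qed.

Lemma mulKg (x y : G) : x^-1 ** (x ** y) = y.
Proof. rewrite mulA, mulVg, mul1g. reflexivity. Qed.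

Lemma mulKVg (x y : G) : x ** (x^-1 ** y) = y.
Proof. rewrite mulA, mulgV, mul1g. reflexivity. Qed.

Lemma mulgI (x y z : G) : x ** y = x ** z -> y = z.
Proof. intro E. rewrite <- (mulKg x y), E, mulKg. reflexivity. Qed.

Lemma mulIg (x y z : G) : y ** x = z ** x -> y = z.
Proof.
  intro E. rewrite <- (mulg1 y), <- (mulgV x), mulA, E, <- mulA, mulgV, mulg1.
  reflexivity.
Qed.

Lemma eq_invg_mul (x y : G) : x ** y = 1 -> y = x^-1.
Proof. intro E. apply (mulgI x). rewrite E, mulgV. reflexivity. Qed.

Lemma invgK (x : G) : (x^-1)^-1 = x.
Proof. symmetry. apply eq_invg_mul, mulVg. Qed.

Lemma invMg (x y : G) : (x ** y)^-1 = y^-1 ** x^-1.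
Proof. symmetry. apply eq_invg_mul. rewrite <- !mulA, mulKVg. apply mulgV. Qed.

Lemma invg1 : (1 : G)^-1 = 1.
Proof. symmetry. apply eq_invg_mul, mul1g. Qed.

Definition conjg (a h : G) : G := h^-1 ** (a ** h).

Hint Rewrite <- mulA : gsimp.
Hint Rewrite mul1g mulVg mulg1 mulgV mulKg mulKVg invgK invMg invg1 : gsimp.

Ltac gsimpl := unfold conjg, comm in *; autorewrite with gsimp in *.

Lemma gpowSr (x : G) n : x ^+ S n = x ^+ n ** x.
Proof.
  induction n as [|n IH]; simpl in *; [gsimpl; reflexivity|].
  rewrite <- (mulA G x (x ^+ n) x), <- IH. reflexivity.
Qed.

Lemma gpowD (x : G) m n : x ^+ (m + n) = x ^+ m ** x ^+ n.
Proof. induction m as [|m IH]; simpl; [|rewrite IH]; gsimpl; reflexivity. Qed.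

Lemma gpowM (x : G) m n : x ^+ (m * n) = x ^+ m ^+ n.
Proof.
  induction n as [|n IH]; simpl; [rewrite Nat.mul_0_r; reflexivity|].
  rewrite Nat.mul_succ_r, Nat.add_comm, gpowD, IH. reflexivity.
Qed.

Lemma gpow_comm (x : G) m n : x ^+ m ** x ^+ n = x ^+ n ** x ^+ m.
Proof. rewrite <- !gpowD, Nat.add_comm. reflexivity. Qed.

Lemma gpowV (x : G) n : x^-1 ^+ n = (x ^+ n)^-1.
Proof.
  induction n as [|n IH]; simpl; [gsimpl; reflexivity|].
  rewrite IH, <- invMg, <- gpowSr. reflexivity.
Qed.

Lemma conjXg (x h : G) n : conjg (x ^+ n) h = conjg x h ^+ n.
Proof. induction n as [|n IH]; simpl; [|rewrite <- IH]; gsimpl; reflexivity. Qed.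

Lemma conjMg (a b h : G) : conjg (a ** b) h = conjg a h ** conjg b h.
Proof. gsimpl. reflexivity. Qed.

Lemma conjVg (a h : G) : conjg (a^-1) h = (conjg a h)^-1.
Proof. gsimpl. reflexivity. Qed.

Lemma conj1g (h : G) : conjg 1 h = 1.
Proof. gsimpl. reflexivity. Qed.

Lemma conjg1 (a : G) : conjg a 1 = a.
Proof. gsimpl. reflexivity. Qed.

Lemma conjgM (a h k : G) : conjg (conjg a h) k = conjg a (h ** k).
Proof. gsimpl. reflexivity. Qed.

Lemma conjg_mulR (a h : G) : conjg a h = a ** [~ a, h].
Proof. gsimpl. reflexivity. Qed.

Lemma conjg_inj (a b h : G) : conjg a h = conjg b h -> a = b.
Proof.
  intro E. rewrite <- (conjg1 a), <- (conjg1 b), <- (mulgV h), <- !conjgM, E.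
  reflexivity.
Qed.

Lemma comm1g (g : G) : [~ 1, g] = 1.
Proof. gsimpl. reflexivity. Qed.

Lemma commgMr (v b c : G) : [~ v, b ** c] = [~ v, c] ** conjg [~ v, b] c.
Proof. gsimpl. reflexivity. Qed.

Lemma commute_sym (a b : G) : commute G a b -> commute G b a.
Proof. unfold commute; auto. Qed.

Lemma conjg_fixP (a h : G) : conjg a h = a -> commute G a h.
Proof. unfold commute. intro E. rewrite <- E at 2. gsimpl. reflexivity. Qed.

Lemma commute_gpow (a b : G) n : commute G a b -> commute G (a ^+ n) b.
Proof.
  unfold commute. intro E. induction n as [|n IH]; simpl; [gsimpl; reflexivity|].
  rewrite <- mulA, IH, mulA, E, <- mulA. reflexivity.
Qed.

Lemma commuteV (u a : G) : commute G u a -> commute G u (a^-1).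
Proof.
  unfold commute. intro E.
  replace (u ** a^-1) with (a^-1 ** ((a ** u) ** a^-1)) by (gsimpl; reflexivity).
  rewrite <- E. gsimpl. reflexivity.
Qed.

Lemma hyper_comm (x g : G) : Z x -> Z [~ x, g].
Proof. intros [|y Hy]; [rewrite comm1g; constructor | auto]. Qed.

Lemma hyper_conjg (x : G) : Z x -> forall h, Z (conjg x h).
Proof.
  induction 1 as [|x _ IH]; intro h; [rewrite conj1g; constructor|].
  apply hyper_step. intro g.
  replace [~ conjg x h, g] with (conjg [~ x, h ** g ** h^-1] h)
    by (gsimpl; reflexivity).
  apply IH.
Qed.

Lemma hyper_conjgV (x : G) : Z x -> forall h, Z (conjg (x^-1) h).
Proof.
  induction 1 as [|x _ IH]; intro h; [rewrite invg1, conj1g; constructor|].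
  apply hyper_step. intro g.
  replace [~ conjg (x^-1) h, g] with (conjg ([~ x, h ** g ** h^-1]^-1) (x^-1 ** h))
    by (gsimpl; reflexivity).
  apply IH.
Qed.

Lemma hyper_inv (x : G) : Z x -> Z (x^-1).
Proof. intro Hx. rewrite <- (conjg1 (x^-1)). apply hyper_conjgV, Hx. Qed.

Lemma subgroup1 (H : G -> Prop) : is_subgroup G H -> H 1.
Proof. intros [H1 _]; exact H1. Qed.

Lemma subgroupM (H : G -> Prop) : is_subgroup G H -> forall x y, H x -> H y -> H (x ** y).
Proof. intros [_ [HM _]]; exact HM. Qed.

Lemma subgroupV (H : G -> Prop) : is_subgroup G H -> forall x, H x -> H (x^-1).
Proof. intros [_ [_ HV]]; exact HV. Qed.

Lemma subgroupX (H : G -> Prop) : is_subgroup G H -> forall x n, H x -> H (x ^+ n).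
Proof.
  intros HH x n Hx. induction n; simpl; [apply subgroup1 | apply subgroupM]; auto.
Qed.

Lemma subgroupR (H : G -> Prop) : is_subgroup G H -> forall a b, H a -> H b -> H [~ a, b].
Proof.
  intros HH a b Ha Hb. unfold comm.
  repeat apply subgroupM; auto; apply subgroupV; auto.
Qed.

Lemma subgroup_conjg (H : G -> Prop) : is_subgroup G H -> forall a h, H a -> H h -> H (conjg a h).
Proof.
  intros HH a h Ha Hh. unfold conjg.
  apply (subgroupM H HH); [apply (subgroupV H HH) | apply (subgroupM H HH)]; auto.
Qed.

Lemma gen_subgroup (P : G -> Prop) : is_subgroup G (gen G P).
Proof. split; [apply gen_one | split; intros; [apply gen_mul | apply gen_inv]; auto]. Qed.

Lemma gen_min (P H : G -> Prop) : is_subgroup G H -> (forall x, P x -> H x) ->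
  forall x, gen G P x -> H x.
Proof. intros [H1 [HM HV]] HPH x Hx. induction Hx; auto. Qed.

Lemma gen_mono (P Q : G -> Prop) : (forall x, P x -> Q x) ->
  forall x, gen G P x -> gen G Q x.
Proof. intro HPQ. apply gen_min; [apply gen_subgroup | intros; apply gen_base; auto]. Qed.

Definition normalizes (W N : G -> Prop) : Prop :=
  forall w n, W w -> N n -> N (conjg n w).

Lemma gen_normalized (W P : G -> Prop) : (forall w p, W w -> P p -> gen G P (conjg p w)) ->
  normalizes W (gen G P).
Proof.
  intros HP w n Hw Hn. induction Hn as [p Hp| |a b _ IHa _ IHb|a _ IHa].
  - auto.
  - rewrite conj1g. apply gen_one.
  - rewrite conjMg. apply gen_mul; auto.
  - rewrite conjVg. apply gen_inv; auto.
Qed.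

Lemma pigeonhole (f : nat -> G) (l : list G) : (forall k, In (f k) l) ->
  exists i j, i < j /\ f i = f j.
Proof.
  intro Hf. apply NNPP. intro Hn.
  assert (Hinj : forall i j, f i = f j -> i = j).
  { intros i j E. destruct (Nat.lt_trichotomy i j) as [h|[h|h]]; auto;
      exfalso; apply Hn; [exists i, j | exists j, i]; auto. }
  assert (Hnd : NoDup (map f (seq 0 (S (length l))))).
  { apply NoDup_map_NoDup_ForallPairs; [intros a b _ _; apply Hinj | apply seq_NoDup]. }
  assert (Hincl : incl (map f (seq 0 (S (length l)))) l).
  { intros y Hy. apply in_map_iff in Hy. destruct Hy as [k [<- _]]. apply Hf. }
  pose proof (NoDup_incl_length Hnd Hincl) as Hlen.
  rewrite length_map, length_seq in Hlen. lia.
Qed.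

Lemma finite_subgroup_finite_order (H : G -> Prop) : is_subgroup G H -> finite_set G H ->
  forall x, H x -> finite_order G x.
Proof.
  intros HH [l Hl] x Hx.
  destruct (pigeonhole (gpow G x) l) as [i [j [Hij E]]].
  { intro k. apply Hl, subgroupX; auto. }
  exists (j - i). split; [lia|].
  replace j with ((j - i) + i) in E by lia. rewrite gpowD in E.
  apply (mulIg (x ^+ i)). rewrite mul1g. auto.
Qed.

Lemma finite_orderV (x : G) : finite_order G x -> finite_order G (x^-1).
Proof. intros [n [Hn E]]. exists n. rewrite gpowV, E, invg1. auto. Qed.

Lemma finite_order_conjg (x h : G) : finite_order G x -> finite_order G (conjg x h).
Proof. intros [n [Hn E]]. exists n. rewrite <- conjXg, E, conj1g. auto. Qed.

Lemma list_uniform_bound (A : Type) (P : A -> nat -> Prop) (l : list A) :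
  (forall a n m, P a n -> n <= m -> P a m) ->
  (forall a, In a l -> exists n, P a n) -> exists n, forall a, In a l -> P a n.
Proof.
  intros Hmono H. induction l as [|a l IH]; [exists 0; intros a []|].
  destruct (H a (or_introl eq_refl)) as [n Hn].
  destruct IH as [m Hm]; [intros b Hb; apply H; simpl; auto|].
  exists (n + m). intros b [<-|Hb]; [apply Hmono with n | apply Hmono with m]; auto; lia.
Qed.

Lemma list_choice (A B : Type) (P : A -> B -> Prop) (l : list A) :
  (forall a, In a l -> exists b, P a b) ->
  exists lb, (forall a, In a l -> exists b, In b lb /\ P a b) /\
             (forall b, In b lb -> exists a, In a l /\ P a b).
Proof.
  intro H. induction l as [|a l IH]; [exists []; split; intros ? []|].
  destruct (H a (or_introl eq_refl)) as [b Hb].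
  destruct IH as [lb [H1 H2]]; [intros c Hc; apply H; simpl; auto|].
  exists (b :: lb). split.
  - intros c [<-|Hc]; [exists b; simpl; auto|].
    destruct (H1 c Hc) as [d [Hd Pd]]. exists d; simpl; auto.
  - intros d [<-|Hd]; [exists a; simpl; auto|].
    destruct (H2 d Hd) as [c [Hc Pc]]. exists c; simpl; auto.
Qed.

Lemma uniform_exponent (N : G -> Prop) (L : list G) : is_subgroup G N ->
  (forall u, In u L -> exists e, 0 < e /\ N (u ^+ e)) ->
  exists E, 0 < E /\ forall u, In u L -> N (u ^+ E).
Proof.
  intros HN H. induction L as [|a L IH]; [exists 1%nat; split; auto; intros ? []|].
  destruct (H a (or_introl eq_refl)) as [e [He Ne]].
  destruct IH as [E [HE NE]]; [intros b Hb; apply H; simpl; auto|].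
  exists (e * E). split; [lia|]. intros u [<-|Hu].
  - rewrite gpowM. apply subgroupX; auto.
  - rewrite Nat.mul_comm, gpowM. apply subgroupX; auto.
Qed.

Section CosetEquivalence.
Variables W N : G -> Prop.
Hypothesis HW : is_subgroup G W.
Hypothesis HN : is_subgroup G N.
Hypothesis HNW : forall n, N n -> W n.
Hypothesis HnormN : normalizes W N.

Definition eqmod (a b : G) : Prop := exists n, N n /\ a = b ** n.

Lemma eqmod_refl a : eqmod a a.
Proof. exists 1. split; [apply subgroup1; auto | gsimpl; auto]. Qed.

Lemma eqmod_sym a b : eqmod a b -> eqmod b a.
Proof. intros [n [Hn ->]]. exists (n^-1). split; [apply subgroupV; auto | gsimpl; auto]. Qed.

Lemma eqmod_trans a b c : eqmod a b -> eqmod b c -> eqmod a c.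
Proof.
  intros [n [Hn ->]] [m [Hm ->]]. exists (m ** n).
  split; [apply subgroupM; auto | gsimpl; auto].
Qed.

Lemma eqmod_mull c a b : eqmod a b -> eqmod (c ** a) (c ** b).
Proof. intros [n [Hn ->]]. exists n. split; [auto | gsimpl; auto]. Qed.

Lemma eqmod_mulr c a b : W c -> eqmod a b -> eqmod (a ** c) (b ** c).
Proof. intros Hc [n [Hn ->]]. exists (conjg n c). split; [auto | gsimpl; auto]. Qed.

Lemma eqmod_mul a a' b b' : W b' -> eqmod a a' -> eqmod b b' -> eqmod (a ** b) (a' ** b').
Proof.
  intros Hb Ea Eb. apply eqmod_trans with (a ** b');
    [apply eqmod_mull | apply eqmod_mulr]; auto.
Qed.

Lemma eqmod_mulN a n : N n -> eqmod (a ** n) a.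
Proof. intro Hn. exists n; auto. Qed.

Lemma eqmod_1 a : eqmod 1 a -> N a.
Proof.
  intros [n [Hn E]]. replace a with (n^-1); [apply subgroupV; auto|].
  apply (mulIg n). rewrite mulVg, <- E. reflexivity.
Qed.

Lemma eqmodX a b j : W b -> eqmod a b -> eqmod (a ^+ j) (b ^+ j).
Proof.
  intros Hb E. induction j; simpl; [apply eqmod_refl|].
  apply eqmod_mul; auto. apply subgroupX; auto.
Qed.

Lemma eqmod_conjg a b w : W w -> eqmod a b -> eqmod (conjg a w) (conjg b w).
Proof. intros Hw [n [Hn ->]]. exists (conjg n w). split; [auto | gsimpl; auto]. Qed.

Definition central_mod (u : G) : Prop := forall w, W w -> eqmod (conjg u w) u.

Lemma central_modX u j : W u -> central_mod u -> central_mod (u ^+ j).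
Proof. intros Hu Hc w Hw. rewrite conjXg. apply eqmodX; auto. Qed.

Lemma central_mod_swap u w : W w -> central_mod u -> eqmod (w ** u) (u ** w).
Proof.
  intros Hw Hc. apply eqmod_sym.
  replace (u ** w) with (w ** conjg u w) by (gsimpl; reflexivity).
  apply eqmod_mull, Hc, Hw.
Qed.

Section PowerProducts.
Variable E : nat.
Hypothesis HE : 0 < E.

(* The products u1^i1 * ... * uk^ik with 0 <= ij < E: a transversal of N in
   the subgroup generated by N and the uj, when the uj are central modulo N
   and their E-th powers lie in N. *)
Fixpoint power_products (L : list G) : list G :=
  match L with
  | [] => [1]
  | u :: L' => flat_map (fun i => map (fun p => u ^+ i ** p) (power_products L')) (seq 0 E)
  end.

Lemma in_power_products_cons u L r : In r (power_products (u :: L)) <->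
  exists i p, i < E /\ In p (power_products L) /\ r = u ^+ i ** p.
Proof.
  simpl. rewrite in_flat_map. split.
  - intros [i [Hi Hr]]. apply in_seq in Hi. apply in_map_iff in Hr.
    destruct Hr as [p [<- Hp]]. exists i, p. repeat split; auto; lia.
  - intros [i [p [Hi [Hp ->]]]]. exists i.
    split; [apply in_seq; lia | apply in_map_iff; eauto].
Qed.

Lemma one_in_power_products L : In 1 (power_products L).
Proof.
  induction L; simpl; auto. apply in_power_products_cons.
  exists 0, 1. simpl. repeat split; auto. gsimpl. reflexivity.
Qed.

Definition central_torsion_mod (L : list G) : Prop :=
  forall u, In u L -> W u /\ central_mod u /\ N (u ^+ E).

Lemma power_products_sub L : central_torsion_mod L ->
  forall r, In r (power_products L) -> W r.
Proof.
  induction L as [|u L IH]; intros HL r Hr; simpl in Hr.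
  - destruct Hr as [<-|[]]. apply subgroup1; auto.
  - apply in_power_products_cons in Hr. destruct Hr as [i [p [_ [Hp ->]]]].
    apply subgroupM; auto.
    + apply subgroupX; auto. apply HL; simpl; auto.
    + apply IH; auto. intros v Hv; apply HL; simpl; auto.
Qed.

Lemma eqmodX_mod u k : W u -> N (u ^+ E) -> eqmod (u ^+ k) (u ^+ (k mod E)).
Proof.
  intros Hu HuE. rewrite (Nat.div_mod_eq k E) at 1.
  rewrite gpowD, gpow_comm, gpowM. apply eqmod_mulN, subgroupX; auto.
Qed.

Lemma power_products_X L : central_torsion_mod L -> forall u k, In u L ->
  exists r, In r (power_products L) /\ eqmod (u ^+ k) r.
Proof.
  induction L as [|v L IH]; intros HL u k Hu; [destruct Hu|].
  destruct Hu as [->|Hu].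
  - exists (u ^+ (k mod E) ** 1). split.
    + apply in_power_products_cons. exists (k mod E), 1.
      repeat split; [apply Nat.mod_upper_bound; lia | apply one_in_power_products].
    + rewrite mulg1. apply eqmodX_mod; apply HL; simpl; auto.
  - destruct (IH (fun w Hw => HL w (or_intror Hw)) u k Hu) as [r [Hr Hk]].
    exists (v ^+ 0 ** r). split.
    + apply in_power_products_cons. exists 0, r. repeat split; auto.
    + simpl. rewrite mul1g. auto.
Qed.

Lemma power_products_M L : central_torsion_mod L -> forall p q,
  In p (power_products L) -> In q (power_products L) ->
  exists r, In r (power_products L) /\ eqmod (p ** q) r.
Proof.
  induction L as [|u L IH]; intros HL p q Hp Hq.
  - simpl in Hp, Hq. destruct Hp as [<-|[]]. destruct Hq as [<-|[]].
    exists 1. split; [simpl; auto | rewrite mul1g; apply eqmod_refl].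
  - assert (HL' : central_torsion_mod L) by (intros w Hw; apply HL; simpl; auto).
    destruct (HL u (or_introl eq_refl)) as [Hu [Hcu HuE]].
    apply in_power_products_cons in Hp. destruct Hp as [i [p' [Hi [Hp' ->]]]].
    apply in_power_products_cons in Hq. destruct Hq as [j [q' [Hj [Hq' ->]]]].
    destruct (IH HL' p' q' Hp' Hq') as [r' [Hr' Er]].
    exists (u ^+ ((i + j) mod E) ** r'). split.
    { apply in_power_products_cons. exists ((i + j) mod E), r'.
      repeat split; auto. apply Nat.mod_upper_bound; lia. }
    assert (Hq'W : W q') by (apply (power_products_sub L); auto).
    assert (Hr'W : W r') by (apply (power_products_sub L); auto).
    (* move u^j to the left past p', which is legitimate modulo N *)
    apply eqmod_trans with (u ^+ i ** ((u ^+ j ** p') ** q')).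
    { rewrite <- !mulA. apply eqmod_mull. rewrite !mulA.
      apply eqmod_mulr; auto. apply central_mod_swap.
      - apply (power_products_sub L); auto.
      - apply central_modX; auto. }
    rewrite !mulA, <- gpowD, <- mulA.
    apply eqmod_mul; auto. apply eqmodX_mod; auto.
Qed.

Lemma power_products_cover L : central_torsion_mod L ->
  forall z, gen G (fun z => N z \/ In z L) z ->
  (exists r, In r (power_products L) /\ eqmod z r) /\
  (exists r, In r (power_products L) /\ eqmod (z^-1) r).
Proof.
  intros HL z Hz.
  assert (Hsub : forall x, gen G (fun z => N z \/ In z L) x -> W x).
  { apply gen_min; auto. intros x [Hx|Hx]; auto. apply HL; auto. }
  induction Hz as [z [Hz|Hz]| |a b Ha [[ra [Hra Ea]] [ra' [Hra' Ea']]]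
                   Hb [[rb [Hrb Eb]] [rb' [Hrb' Eb']]] |a _ [IH IH']].
  - split; exists 1; split; try apply one_in_power_products.
    + exists z. split; [auto | gsimpl; auto].
    + exists (z^-1). split; [apply subgroupV; auto | gsimpl; auto].
  - destruct (HL z Hz) as [Hu [_ HuE]]. split.
    + destruct (power_products_X L HL z 1 Hz) as [r [Hr Er]].
      exists r. split; auto. simpl in Er. rewrite mulg1 in Er. auto.
    + destruct (power_products_X L HL z (E - 1) Hz) as [r [Hr Er]].
      exists r. split; auto. apply eqmod_trans with (z ^+ (E - 1)); auto.
      exists ((z ^+ E)^-1). split; [apply subgroupV; auto|].
      replace E with (S (E - 1)) at 2 by lia. simpl. gsimpl. reflexivity.
  - split; exists 1; split; try apply one_in_power_products; gsimpl; apply eqmod_refl.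
  - split.
    + destruct (power_products_M L HL ra rb Hra Hrb) as [r [Hr Er]].
      exists r. split; auto. apply eqmod_trans with (ra ** rb); auto.
      apply eqmod_mul; auto. apply (power_products_sub L); auto.
    + destruct (power_products_M L HL rb' ra' Hrb' Hra') as [r [Hr Er]].
      exists r. split; auto. rewrite invMg. apply eqmod_trans with (rb' ** ra'); auto.
      apply eqmod_mul; auto. apply (power_products_sub L); auto.
  - split; [exact IH' | rewrite invgK; exact IH].
Qed.
End PowerProducts.

Lemma central_torsion_transversal L :
  (forall u, In u L -> W u /\ central_mod u /\ exists e, 0 < e /\ N (u ^+ e)) ->
  exists T, In 1 T /\ (forall r, In r T -> W r) /\
    forall z, gen G (fun z => N z \/ In z L) z -> exists r, In r T /\ eqmod z r.
Proof.
  intro HL.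
  destruct (uniform_exponent N L HN) as [E [HE HLE]]; [intros u Hu; apply HL, Hu|].
  assert (HLt : central_torsion_mod E L).
  { intros u Hu. destruct (HL u Hu) as [HuW [Hcu _]]. auto. }
  exists (power_products E L). repeat split.
  - exact (one_in_power_products E HE L).
  - exact (power_products_sub E HE L HLt).
  - intros z Hz. apply (power_products_cover E HE L HLt z Hz).
Qed.

Lemma join_normalized L : (forall u, In u L -> central_mod u) ->
  normalizes W (gen G (fun z => N z \/ In z L)).
Proof.
  intro HL. apply gen_normalized. intros w z Hw [Hz|Hz].
  - apply gen_base. left. apply HnormN; auto.
  - destruct (HL z Hz w Hw) as [n [Hn ->]]. apply gen_mul; apply gen_base; auto.
Qed.

Lemma join_finite L : finite_set G N ->
  (forall u, In u L -> W u /\ central_mod u /\ exists e, 0 < e /\ N (u ^+ e)) ->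
  finite_set G (gen G (fun z => N z \/ In z L)).
Proof.
  intros [lN HlN] HL. destruct (central_torsion_transversal L HL) as [T [_ [_ HT]]].
  exists (flat_map (fun r => map (fun n => r ** n) lN) T).
  intros z Hz. destruct (HT z Hz) as [r [Hr [n [Hn ->]]]].
  apply in_flat_map. exists r. split; auto. apply in_map. auto.
Qed.
End CosetEquivalence.

Definition lcomm (x : G) (ys : list G) : G := fold_left (fun a y => [~ a, y]) ys x.

Lemma lcomm1 ys : lcomm 1 ys = 1.
Proof. induction ys; simpl; auto. rewrite comm1g. auto. Qed.

Lemma lcomm_rcons x ys y : lcomm x (ys ++ [y]) = [~ lcomm x ys, y].
Proof. unfold lcomm. rewrite fold_left_app. reflexivity. Qed.

Lemma subgroup_lcomm (H : G -> Prop) : is_subgroup G H ->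
  forall ys x, H x -> (forall y, In y ys -> H y) -> H (lcomm x ys).
Proof.
  intros HH ys. induction ys as [|y ys IH]; intros x Hx Hys; simpl; auto.
  apply IH; [apply subgroupR; auto; apply Hys; simpl; auto | intros; apply Hys; simpl; auto].
Qed.

Fixpoint tuples (S : list G) (k : nat) : list (list G) :=
  match k with
  | 0 => [[]]
  | S k => flat_map (fun y => map (cons y) (tuples S k)) S
  end.

Lemma in_tuples S k ys : In ys (tuples S k) <-> length ys = k /\ incl ys S.
Proof.
  revert ys. induction k as [|k IH]; intro ys; simpl.
  - split; [intros [<-|[]]; split; [reflexivity | intros ? []]|].
    intros [Hl _]. destruct ys; [auto | discriminate].
  - rewrite in_flat_map. split.
    + intros [y [Hy Hys]]. apply in_map_iff in Hys. destruct Hys as [t [<- Ht]].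
      apply IH in Ht. destruct Ht as [Hl Hincl]. split; [simpl; auto|].
      intros z [<-|Hz]; auto.
    + intros [Hl Hincl]. destruct ys as [|y ys]; [discriminate|].
      exists y. split; [apply Hincl; simpl; auto|]. apply in_map, IH.
      split; [simpl in Hl; lia | intros z Hz; apply Hincl; simpl; auto].
Qed.

Section HypercentralTorsionGenerated.
Variable s : list G.
Hypothesis Hs : forall a, In a s -> Z a /\ finite_order G a.
Local Notation W := (fg_subgroup G s).
Local Notation sgens := (s ++ map (@inv G) s).

Lemma sgens_hyper_torsion y : In y sgens -> Z y /\ finite_order G y /\ W y.
Proof.
  intro Hy. apply in_app_iff in Hy. destruct Hy as [Hy|Hy].
  - destruct (Hs y Hy). repeat split; auto. apply gen_base; auto.
  - apply in_map_iff in Hy. destruct Hy as [a [<- Ha]]. destruct (Hs a Ha).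
    repeat split; [apply hyper_inv | apply finite_orderV | apply gen_inv, gen_base]; auto.
Qed.

Definition lcomm_vanishes (x : G) (n : nat) : Prop :=
  forall ys, incl ys sgens -> n <= length ys -> lcomm x ys = 1.

Lemma hyper_lcomm_vanishes x : Z x -> exists n, lcomm_vanishes x n.
Proof.
  induction 1 as [|x _ IH]; [exists 0; intros ys _ _; apply lcomm1|].
  destruct (list_uniform_bound G (fun y => lcomm_vanishes [~ x, y]) sgens) as [n Hn].
  - intros a n m Hn Hnm ys H1 H2. apply Hn; auto. lia.
  - intros y _. apply IH.
  - exists (S n). intros [|y ys] Hys Hl; simpl in Hl; [lia|].
    apply Hn; [apply Hys; simpl; auto | intros z Hz; apply Hys; simpl; auto | lia].
Qed.

Definition is_lcomm (k : nat) (u : G) : Prop :=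
  exists x ys, In x sgens /\ incl ys sgens /\ length ys = k /\ u = lcomm x ys.

Definition lcomm_list (k : nat) : list G :=
  flat_map (fun x => map (lcomm x) (tuples sgens k)) sgens.

Lemma in_lcomm_list k u : In u (lcomm_list k) <-> is_lcomm k u.
Proof.
  unfold lcomm_list. rewrite in_flat_map. split.
  - intros [x [Hx Hu]]. apply in_map_iff in Hu. destruct Hu as [ys [<- Hys]].
    apply in_tuples in Hys. exists x, ys. tauto.
  - intros [x [ys [Hx [Hys [Hl ->]]]]]. exists x. split; auto.
    apply in_map, in_tuples. auto.
Qed.

Lemma is_lcomm_sub k u : is_lcomm k u -> W u.
Proof.
  intros [x [ys [Hx [Hys [_ ->]]]]]. apply subgroup_lcomm; [apply gen_subgroup | |].
  - apply sgens_hyper_torsion; auto.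
  - intros y Hy. apply sgens_hyper_torsion; auto.
Qed.

Definition finite_above_weight (k : nat) : Prop :=
  forall N : G -> Prop, is_subgroup G N -> (forall n, N n -> W n) -> normalizes W N ->
  finite_set G N -> (forall u, is_lcomm k u -> N u) -> finite_set G W.

Lemma finite_above_weight0 : finite_above_weight 0.
Proof.
  intros N HN _ _ [l Hl] HC. exists l. intros x Hx. apply Hl.
  revert x Hx. apply gen_min; auto. intros x Hx. apply HC.
  exists x, []. repeat split; [apply in_app_iff; auto | intros ? [] ].
Qed.

Section WeightStep.
Variables (N : G -> Prop) (k : nat).
Hypothesis HN : is_subgroup G N.
Hypothesis HNW : forall n, N n -> W n.
Hypothesis HnormN : normalizes W N.
Hypothesis HC : forall u, is_lcomm (S k) u -> N u.

Lemma central_mod_of_gens u : W u -> (forall y, In y s -> N [~ u, y]) -> central_mod W N u.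
Proof.
  intros Hu Hy w Hw. induction Hw as [y Hy'| |a b Ha IHa Hb IHb|a Ha IHa].
  - rewrite conjg_mulR. apply eqmod_mulN. auto.
  - rewrite conjg1. apply eqmod_refl; auto.
  - rewrite <- conjgM. apply eqmod_trans with (conjg u b); auto.
    apply eqmod_conjg with W; auto.
  - apply eqmod_sym; auto.
    replace u with (conjg (conjg u a) (a^-1)) at 1 by (rewrite conjgM; gsimpl; reflexivity).
    apply eqmod_conjg with W; auto. apply gen_inv; auto.
Qed.

Lemma lcomm_central_mod u : is_lcomm k u -> central_mod W N u.
Proof.
  intros [x [ys [Hx [Hys [Hl ->]]]]]. apply central_mod_of_gens.
  - apply (is_lcomm_sub k). exists x, ys. auto.
  - intros y Hy. rewrite <- lcomm_rcons. apply HC. exists x, (ys ++ [y]).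
    repeat split; auto.
    + intros z Hz. apply in_app_iff in Hz. destruct Hz as [Hz|[<-|[]]]; auto.
      apply in_app_iff; auto.
    + rewrite length_app. simpl. lia.
Qed.

Lemma lcomm_finite_order_mod u : is_lcomm k u -> exists e, 0 < e /\ N (u ^+ e).
Proof.
  intros Hu. pose proof (lcomm_central_mod u Hu) as Hcu.
  assert (HuW : W u) by (apply (is_lcomm_sub k); auto).
  destruct Hu as [x [ys [Hx [Hys [Hl Eu]]]]].
  destruct ys as [|y ys _] using rev_ind.
  - destruct (sgens_hyper_torsion x Hx) as [_ [[e [He Ee]] _]].
    exists e. split; auto. rewrite Eu. simpl. rewrite Ee. apply subgroup1; auto.
  - rewrite lcomm_rcons in Eu. set (v := lcomm x ys) in Eu.
    assert (Hy : In y sgens) by (apply Hys, in_app_iff; simpl; auto).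
    destruct (sgens_hyper_torsion y Hy) as [_ [[e [He Ee]] HyW]].
    (* [v, y^j] = u^j modulo N because u = [v, y] is central modulo N *)
    assert (Hj : forall j, eqmod N [~ v, y ^+ j] (u ^+ j)).
    { induction j as [|j IH]; simpl; [gsimpl; apply eqmod_refl; auto|].
      rewrite commgMr, <- Eu. change (u ** u ^+ j) with (u ^+ S j). rewrite gpowSr.
      apply eqmod_mul with W; auto. apply Hcu, subgroupX; auto. apply gen_subgroup. }
    exists e. split; auto. specialize (Hj e). rewrite Ee in Hj.
    unfold comm in Hj. autorewrite with gsimp in Hj. apply eqmod_1; auto.
Qed.
End WeightStep.

Lemma finite_above_weightS k : finite_above_weight k -> finite_above_weight (S k).
Proof.
  intros IH N HN HNW HnormN HNfin HC.
  set (L := lcomm_list k).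
  assert (HL : forall u, In u L ->
            W u /\ central_mod W N u /\ exists e, 0 < e /\ N (u ^+ e)).
  { intros u Hu. apply in_lcomm_list in Hu.
    split; [apply (is_lcomm_sub k); auto|].
    split; [apply (lcomm_central_mod N k) | apply (lcomm_finite_order_mod N k)]; auto. }
  apply (IH (gen G (fun z => N z \/ In z L))).
  - apply gen_subgroup.
  - apply gen_min; [apply gen_subgroup | intros z [Hz|Hz]; auto; apply HL, Hz].
  - apply (join_normalized W N HnormN L). apply HL.
  - apply (join_finite W N (gen_subgroup _) HN HNW HnormN L HNfin HL).
  - intros u Hu. apply gen_base. right. apply in_lcomm_list. auto.
Qed.

Theorem hypercentral_torsion_gen_finite : finite_set G W.
Proof.
  destruct (list_uniform_bound G lcomm_vanishes sgens) as [K HK].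
  - intros a n m Hn Hnm ys H1 H2. apply Hn; auto. lia.
  - intros a Ha. apply hyper_lcomm_vanishes. apply sgens_hyper_torsion; auto.
  - assert (Hfin : forall k, finite_above_weight k).
    { induction k; [apply finite_above_weight0 | apply finite_above_weightS; auto]. }
    apply (Hfin K (fun z => z = 1)).
    + split; auto. split; intros; subst; gsimpl; auto.
    + intros n ->. apply gen_one.
    + intros w n _ ->. apply conj1g.
    + exists [1]. intros x ->. simpl. auto.
    + intros u [x [ys [Hx [Hys [Hl ->]]]]]. apply HK; auto. lia.
Qed.
End HypercentralTorsionGenerated.

Lemma hyper_torsion_comm x g : Z x -> finite_order G x ->
  Z [~ x, g] /\ finite_order G [~ x, g].
Proof.
  intros Zx Tx. split; [apply hyper_comm; auto|].
  apply (finite_subgroup_finite_order (fg_subgroup G [x; conjg x g])).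
  - apply gen_subgroup.
  - apply hypercentral_torsion_gen_finite.
    intros a [<-|[<-|[]]]; split; auto; [apply hyper_conjg | apply finite_order_conjg]; auto.
  - replace [~ x, g] with (x^-1 ** conjg x g) by (gsimpl; reflexivity).
    apply gen_mul; [apply gen_inv|]; apply gen_base; simpl; auto.
Qed.

Fixpoint engel_comm (x g : G) (i : nat) : G :=
  match i with 0 => x | S i => [~ engel_comm x g i, g] end.

Lemma engel_comm_shift x g i : engel_comm x g (S i) = engel_comm [~ x, g] g i.
Proof. induction i as [|i IH]; simpl in *; [|rewrite IH]; reflexivity. Qed.

Lemma hyper_engel x : Z x -> forall g, exists n, engel_comm x g n = 1.
Proof.
  induction 1 as [|x _ IH]; intro g; [exists 0; reflexivity|].
  destruct (IH g g) as [n Hn]. exists (S n). rewrite engel_comm_shift. auto.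
Qed.

Lemma engel_comm_eq1 x g n i : engel_comm x g n = 1 -> n <= i -> engel_comm x g i = 1.
Proof.
  intros Hn Hi. induction Hi; simpl; [auto | rewrite IHHi; apply comm1g].
Qed.

Lemma engel_comm_hyper_torsion x g i : Z x -> finite_order G x ->
  Z (engel_comm x g i) /\ finite_order G (engel_comm x g i).
Proof.
  intros Zx Tx. induction i as [|i [Zi Ti]]; simpl; auto. apply hyper_torsion_comm; auto.
Qed.

Lemma hyper_torsion_power_commute x g : Z x -> finite_order G x ->
  exists m, 0 < m /\ commute G (g ^+ m) x.
Proof.
  intros Zx Tx. destruct (hyper_engel x Zx g) as [n Hn].
  set (V := fg_subgroup G (map (engel_comm x g) (seq 0 n))).
  assert (HV : forall i, V (engel_comm x g i)).
  { intro i. destruct (Nat.lt_ge_cases i n) as [Hi|Hi].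
    - apply gen_base, in_map, in_seq. lia.
    - rewrite (engel_comm_eq1 x g n i Hn Hi). apply gen_one. }
  assert (HVconj : forall w, V w -> V (conjg w g)).
  { apply (gen_min _ (fun w => V (conjg w g))).
    - split; [rewrite conj1g; apply gen_one|]. split.
      + intros a b Ha Hb. rewrite conjMg. apply gen_mul; auto.
      + intros a Ha. rewrite conjVg. apply gen_inv; auto.
    - intros w Hw. apply in_map_iff in Hw. destruct Hw as [i [<- _]].
      rewrite conjg_mulR. apply gen_mul; [apply HV | apply (HV (S i))]. }
  assert (HVfin : finite_set G V).
  { apply hypercentral_torsion_gen_finite. intros a Ha.
    apply in_map_iff in Ha. destruct Ha as [i [<- _]]. apply engel_comm_hyper_torsion; auto. }
  destruct HVfin as [l Hl].
  destruct (pigeonhole (fun k => conjg x (g ^+ k)) l) as [i [j [Hij E]]].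
  { intro k. apply Hl. induction k as [|k IH].
    - rewrite conjg1. apply (HV 0).
    - rewrite gpowSr, <- conjgM. apply HVconj, IH. }
  exists (j - i). split; [lia|]. apply commute_sym, conjg_fixP.
  replace j with ((j - i) + i) in E by lia. rewrite gpowD, <- conjgM in E.
  apply conjg_inj in E. auto.
Qed.

Lemma commute_gen u s : (forall a, In a s -> commute G u a) ->
  forall h, fg_subgroup G s h -> commute G u h.
Proof.
  intros Hs h Hh. induction Hh as [h Hh| |a b _ IHa _ IHb|a _ IHa]; auto.
  - unfold commute. gsimpl. reflexivity.
  - unfold commute in *. rewrite mulA, IHa, <- mulA, IHb, mulA. reflexivity.
  - apply commuteV; auto.
Qed.

Lemma periodic_of_hyper_torsion_noncommuting x y :
  (forall H : G -> Prop, is_subgroup G H -> ~ abelian G H -> centralizer_le G H) ->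
  Z x -> Z y -> finite_order G x -> finite_order G y -> ~ commute G x y ->
  forall g : G, finite_order G g.
Proof.
  intros Hcent Zx Zy Tx Ty Hxy g.
  destruct (hyper_torsion_power_commute x g Zx Tx) as [m1 [Hm1 C1]].
  destruct (hyper_torsion_power_commute y g Zy Ty) as [m2 [Hm2 C2]].
  set (H := fg_subgroup G [x; y]).
  assert (Hu : H (g ^+ (m1 * m2))).
  { apply (Hcent H (gen_subgroup _)).
    - intro Hab. apply Hxy, Hab; apply gen_base; simpl; auto.
    - apply commute_gen. intros a [<-|[<-|[]]].
      + rewrite gpowM. apply commute_gpow, C1.
      + rewrite Nat.mul_comm, gpowM. apply commute_gpow, C2. }
  assert (Hfin : finite_set G H).
  { apply hypercentral_torsion_gen_finite. intros a [<-|[<-|[]]]; auto. }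
  destruct (finite_subgroup_finite_order H (gen_subgroup _) Hfin _ Hu) as [k [Hk Ek]].
  exists (m1 * m2 * k). split; [apply Nat.mul_pos_pos; [apply Nat.mul_pos_pos|]; auto|].
  rewrite gpowM. auto.
Qed.

Lemma derived1_sub (H : G -> Prop) : is_subgroup G H -> forall z, derived G H 1 z -> H z.
Proof.
  intro HH. apply gen_min; auto. intros z [a [b [Ha [Hb ->]]]]. apply subgroupR; auto.
Qed.

Lemma derived1_normalized (H : G -> Prop) : is_subgroup G H -> normalizes H (derived G H 1).
Proof.
  intro HH. apply gen_normalized. intros w z Hw [a [b [Ha [Hb ->]]]].
  replace (conjg [~ a, b] w) with [~ conjg a w, conjg b w] by (gsimpl; reflexivity).
  apply gen_base. exists (conjg a w), (conjg b w).
  repeat split; apply subgroup_conjg; auto.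
Qed.

Lemma derived_sub_succ (H M : G -> Prop) : (forall z, M z -> derived G H 1 z) ->
  forall k z, derived G M k z -> derived G H (S k) z.
Proof.
  intros HM k. induction k as [|k IH]; [exact HM|].
  change (forall z, gen G (fun z => exists a b,
            derived G M k a /\ derived G M k b /\ z = [~ a, b]) z ->
          gen G (fun z => exists a b,
            derived G H (S k) a /\ derived G H (S k) b /\ z = [~ a, b]) z).
  apply gen_mono. intros z [a [b [Ha [Hb ->]]]]. exists a, b. auto.
Qed.

(* Schreier's lemma: S' holds one Schreier generator for each pair in
   T x (s ∪ s^-1). *)
Lemma schreier_cover (s T : list G) (N : G -> Prop) : In 1 T ->
  (forall t y, In t T -> In y (s ++ map (@inv G) s) ->
     exists w r, N w /\ In r T /\ t ** y = w ** r) ->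
  exists S', (forall w, In w S' -> N w) /\
    forall l, fg_subgroup G s l ->
      exists w r, fg_subgroup G S' w /\ In r T /\ l = w ** r.
Proof.
  intros HT1 Hcov.
  destruct (list_choice (G * G) G
              (fun p w => N w /\ exists r, In r T /\ fst p ** snd p = w ** r)
              (list_prod T (s ++ map (@inv G) s))) as [S' [HS1 HS2]].
  { intros [t y] Hp. apply in_prod_iff in Hp. destruct Hp as [Ht Hy].
    destruct (Hcov t y Ht Hy) as [w [r [Hw [Hr E]]]]. exists w. eauto. }
  exists S'. split; [intros w Hw; destruct (HS2 w Hw) as [_ [_ [HN _]]]; auto|].
  set (M := fg_subgroup G S').
  set (moves l := forall t, In t T -> exists w r, M w /\ In r T /\ t ** l = w ** r).
  assert (Hgens : forall y, In y (s ++ map (@inv G) s) -> moves y).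
  { intros y Hy t Ht. destruct (HS1 (t, y)) as [w [Hw [_ [r [Hr E]]]]];
      [apply in_prod; auto|].
    exists w, r. repeat split; auto. apply gen_base; auto. }
  assert (Hmoves : forall l, fg_subgroup G s l -> moves l /\ moves (l^-1)).
  { intros l Hl. induction Hl as [y Hy| |a b _ [IHa IHa'] _ [IHb IHb']|a _ [IHa IHa']].
    - split; apply Hgens; apply in_app_iff; [left | right; apply in_map]; auto.
    - split; intros t Ht; exists 1, t; repeat split; auto; try apply gen_one;
        gsimpl; reflexivity.
    - split; intros t Ht.
      + destruct (IHa t Ht) as [w1 [r1 [Hw1 [Hr1 E1]]]].
        destruct (IHb r1 Hr1) as [w2 [r2 [Hw2 [Hr2 E2]]]].
        exists (w1 ** w2), r2. repeat split; [apply gen_mul | |]; auto.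
        rewrite mulA, E1, <- mulA, E2. gsimpl. reflexivity.
      + destruct (IHb' t Ht) as [w1 [r1 [Hw1 [Hr1 E1]]]].
        destruct (IHa' r1 Hr1) as [w2 [r2 [Hw2 [Hr2 E2]]]].
        exists (w1 ** w2), r2. repeat split; [apply gen_mul | |]; auto.
        rewrite invMg, mulA, E1, <- mulA, E2. gsimpl. reflexivity.
    - split; [exact IHa' | rewrite invgK; exact IHa]. }
  intros l Hl. destruct (proj1 (Hmoves l Hl) 1 HT1) as [w [r [Hw [Hr E]]]].
  exists w, r. rewrite <- E, mul1g. auto.
Qed.

Lemma soluble_periodic_fg_finite : (forall g : G, finite_order G g) ->
  forall d s, (forall z, derived G (fg_subgroup G s) d z -> z = 1) ->
  finite_set G (fg_subgroup G s).
Proof.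
  intros Hper d. induction d as [|d IH]; intros s Hd.
  { exists [1]. intros z Hz. left. symmetry. apply Hd, Hz. }
  set (L := fg_subgroup G s).
  set (N := derived G L 1).
  assert (HL : is_subgroup G L) by apply gen_subgroup.
  assert (HN : is_subgroup G N) by apply gen_subgroup.
  assert (HNL : forall n, N n -> L n) by (apply derived1_sub; auto).
  assert (HnormN : normalizes L N) by (apply derived1_normalized; auto).
  destruct (central_torsion_transversal L N HL HN HNL HnormN s) as [T [HT1 [HTL HT]]].
  { intros u Hu. assert (HuL : L u) by (apply gen_base; auto). split; [auto|]. split.
    - intros w Hw. rewrite conjg_mulR. apply eqmod_mulN, gen_base.
      exists u, w. auto.
    - destruct (Hper u) as [e [He Ee]]. exists e. rewrite Ee. split; [auto | apply subgroup1; auto]. }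
  destruct (schreier_cover s T N HT1) as [S' [HS'N HS']].
  { intros t y Ht Hy.
    assert (HyL : L y).
    { apply in_app_iff in Hy. destruct Hy as [Hy|Hy]; [apply gen_base; auto|].
      apply in_map_iff in Hy. destruct Hy as [a [<- Ha]]. apply gen_inv, gen_base; auto. }
    destruct (HT (t ** y)) as [r [Hr [n [Hn E]]]].
    { apply (gen_mono (fun z => In z s)); [intros z Hz; right; exact Hz | apply gen_mul; [apply HTL, Ht | exact HyL]]. }
    exists (conjg n (r^-1)), r. repeat split; auto.
    - apply HnormN; auto. apply subgroupV; auto.
    - rewrite E. gsimpl. reflexivity. }
  destruct (IH S') as [lM HlM].
  { intros z Hz. apply Hd. apply (derived_sub_succ L (fg_subgroup G S')); auto.
    apply gen_min; auto. }
  exists (flat_map (fun w => map (fun r => w ** r) T) lM).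
  intros l Hl. destruct (HS' l Hl) as [w [r [Hw [Hr ->]]]].
  apply in_flat_map. exists w. split; [auto | apply in_map; auto].
Qed.
End Development.

Theorem corollary5p5 (G : group) :
  locally_soluble G ->
  (forall H : G -> Prop, is_subgroup G H -> ~ abelian G H -> centralizer_le G H) ->
  (exists x y : G, hypercenter G x /\ hypercenter G y /\
     finite_order G x /\ finite_order G y /\ ~ commute G x y) ->
  locally_finite G.
Proof.
  intros Hsol Hcent [x [y [Zx [Zy [Tx [Ty Hxy]]]]]] s.
  destruct (Hsol s) as [d Hd].
  apply (soluble_periodic_fg_finite G) with d; auto.
  apply (periodic_of_hyper_torsion_noncommuting G x y); auto.
Qed.
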